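(* Let $\mathbb{L}(\theta,\omega):=\mathbb{E}_{(x,y)\sim Q}\,\mathcal{L}(\theta,\omega;(x,y))$. Assume: (i) for all $\theta,\omega$, $\mathbb{E}_{(x,y)\sim Q}[\tfrac{\partial\mathcal{L}}{\partial\theta}(\theta,\omega;(x,y))]=\nabla_\theta\mathbb{L}(\theta,\omega)$ and $\mathbb{E}_{(x,y)\sim Q}\|\tfrac{\partial\mathcal{L}}{\partial\theta}(\theta,\omega;(x,y))-\nabla_\theta\mathbb{L}(\theta,\omega)\|^2\le\sigma^2$; (ii) for every sample $(x,y)$ and every $\omega$, $\|\nabla_\theta\mathcal{L}(\theta_1,\omega;(x,y))-\nabla_\theta\mathcal{L}(\theta_2,\omega;(x,y))\|\le l\|\theta_1-\theta_2\|$. Let $g_\theta(\theta,\omega)=\frac1M\sum_{i=1}^M\frac{\partial\mathcal{L}}{\partial\theta}(\theta,\omega;(x_i,y_i))$ be a minibatch gradient estimate with $(x_i,y_i)$ i.i.d. from $Q$, fresh samples being drawn at each evaluation. For iterates $(\theta_t,\omega_t)$ and $\rho>0$, set $\theta_{t+1/2}:=\theta_t+\rho\,g_\theta(\theta_t,\omega_t)$. Then $$\mathbb{E}\|g_\theta(\theta_{t+1/2},\omega_t)\|^2\le(4\rho^2l^2+2\rho l+2)\,\mathbb{E}\|\nabla_\theta\mathbb{L}(\theta_t,\omega_t)\|^2+(5\rho^2l^2+2)\frac{\sigma^2}{M}.$$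
   Context: $\theta$ denotes model parameters and $\omega$ sampling weights; $\mathcal{L}(\theta,\omega;(x,y))$ is a differentiable per-sample loss and $Q$ the data distribution. Expectations are over all sampling randomness. *)

From HB Require Import structures.
From mathcomp Require Import all_boot all_order all_algebra.
From mathcomp Require Import all_classical all_reals all_analysis.
Set Implicit Arguments. Unset Strict Implicit. Unset Printing Implicit Defensive.
Import Order.TTheory GRing.Theory Num.Theory.
Import numFieldNormedType.Exports.
Local Open Scope classical_set_scope.
Local Open Scope ring_scope.

Section Defs.
Variable R : realType.

Definition enorm (d : nat) (v : 'rV[R]_d) : R :=
  Num.sqrt (\sum_(j < d) (v 0 j) ^+ 2).

Definition grad (d : nat) (f : 'rV[R]_d -> R) (th : 'rV[R]_d) : 'rV[R]_d :=
  \row_(j < d) ('D_(delta_mx 0 j) f th).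

Variables (dX : measure_display) (X : measurableType dX) (W : Type).

Definition sgrad (d : nat) (L : 'rV[R]_d -> W -> X -> R)
  (th : 'rV[R]_d) (w : W) (s : X) : 'rV[R]_d :=
  grad (fun th' => L th' w s) th.

Definition popLoss (Q : probability X R) (d : nat)
  (L : 'rV[R]_d -> W -> X -> R) (th : 'rV[R]_d) (w : W) : R :=
  Rintegral Q setT (fun s => L th w s).

Definition mbgrad (d M : nat) (L : 'rV[R]_d -> W -> X -> R)
  (th : 'rV[R]_d) (w : W) (xs : seq X) : 'rV[R]_d :=
  (M%:R)^-1 *: \sum_(s <- xs) sgrad L th w s.

(* Expectation of F over a sample xs = [:: s_1; ...; s_n] of n i.i.d.
   draws from Q (iterated integral, i.e. integral w.r.t. Q^{(x) n}). *)
Fixpoint iidE (Q : probability X R) (n : nat) (F : seq X -> \bar R) : \bar R :=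
  match n with
  | 0 => F [::]
  | n'.+1 => (\int[Q]_s iidE Q n' (fun xs => F (s :: xs)))%E
  end.
End Defs.

From HB Require Import structures.
From mathcomp Require Import all_boot all_order all_algebra.
From mathcomp Require Import all_classical all_reals all_analysis.
From mathcomp Require Import measurable_realfun ring lra.
Set Implicit Arguments. Unset Strict Implicit. Unset Printing Implicit Defensive.
Import Order.TTheory GRing.Theory Num.Theory.
Import numFieldNormedType.Exports.
Local Open Scope classical_set_scope.
Local Open Scope ring_scope.

(* Conditionally on the first minibatch g, the second minibatch is an average
   of M fresh samples at theta' = theta + rho g, so its second moment is
   |grad LL(theta')|^2 + V(theta')/M with V(theta') <= sigma^2 (bias-variance
   decomposition).  By Jensen the mean gradient inherits the Lipschitz bound of
   the per-sample gradients, whence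
   |grad LL(theta')|^2 <= 2 |grad LL(theta)|^2 + 2 rho^2 l^2 |g|^2, and
   averaging over g, E|g|^2 = |grad LL(theta)|^2 + V(theta)/M.  This gives
   (2 rho^2 l^2 + 2) |grad LL|^2 + (2 rho^2 l^2 + 1) sigma^2/M, below the stated
   bound since l |grad LL| >= 0.  Nothing is assumed measurable in the
   iterates or in the first minibatch, so the outer expectations are only
   compared through pointwise affine majorants, which the integral of
   nonnegative functions respects under a probability measure. *)

Section comp_nnsfun.
Import HBSimple HBNNSimple.
Context d (T : measurableType d) (R : realType) (phi : R -> R).
Hypotheses (mphi : measurable_fun setT phi) (phi_ge0 : forall r, 0 <= phi r).
Variable h : {nnsfun T >-> R}.

Definition comp_nnsfun_fun := phi \o h.

Lemma comp_nnsfun_fimfun : finite_set (range comp_nnsfun_fun).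
Proof.
rewrite /comp_nnsfun_fun -(image_comp h phi).
by apply: finite_image; exact: (fimfunP h).
Qed.

HB.instance Definition _ := @FiniteImage.Build T R _ comp_nnsfun_fimfun.

Lemma measurable_comp_nnsfun_fun : measurable_fun setT comp_nnsfun_fun.
Proof. exact: measurableT_comp. Qed.
HB.instance Definition _ :=
  @isMeasurableFun.Build d _ T R _ measurable_comp_nnsfun_fun.

HB.instance Definition _ :=
  @isNonNegFun.Build T R comp_nnsfun_fun (fun x => phi_ge0 (h x)).

Definition comp_nnsfun : {nnsfun T >-> R} := [nnsfun of comp_nnsfun_fun].
End comp_nnsfun.

Section integral_le_affine.
Local Open Scope ereal_scope.
Import HBSimple HBNNSimple.
Context d (T : measurableType d) (R : realType) (mu : probability T R).

(* No measurability is assumed: every simple [h <= f] is dominated by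
   [c * h' + K] with the simple [h' := max (h - K) 0 / c <= g]. *)
Lemma integral_le_affine (f g : T -> \bar R) (c K : R) :
  (0 < c)%R -> (0 <= K)%R -> (forall x, 0 <= f x) -> (forall x, 0 <= g x) ->
  (forall x, f x <= c%:E * g x + K%:E) ->
  \int[mu]_x f x <= c%:E * \int[mu]_x g x + K%:E.
Proof.
move=> c0 K0 f0 g0 fg.
rewrite ge0_integralTE//; apply: ge_ereal_sup => _ [h /= hf <-].
pose phi (r : R) := (Num.max (r - K) 0 / c)%R.
have mphi : measurable_fun setT phi.
  apply: measurable_funM => //; apply: measurable_maxr => //.
  exact: measurable_funB.
have phi_ge0 r : (0 <= phi r)%R by rewrite divr_ge0 ?le_max ?lexx ?orbT ?ltW.
pose h' := comp_nnsfun mphi phi_ge0 h.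
pose hK : {nnsfun T >-> R} := cst_nnsfun T (NngNum K0).
pose hc : {nnsfun T >-> R} := scale_nnsfun h' (ltW c0).
have h_le x : (h x <= add_nnsfun hK hc x)%R.
  rewrite /= /comp_nnsfun_fun /phi /=.
  by rewrite [(c * _)%R]mulrC divfK ?gt_eqF // -lerBlDl le_max lexx.
apply: le_trans (le_sintegral mu h_le) _.
rewrite sintegralD addeC.
have -> : sintegral mu hK = K%:E.
  rewrite (_ : hK = cst (NngNum K0)%:num \_ setT :> (T -> R)); last first.
    by rewrite patch_setT.
  by rewrite sintegral_EFin_cst// -[RHS]mule1; congr (_ * _); exact: probability_setT.
rewrite leeD2r// sintegralrM lee_pmul2l ?lte_fin// ge0_integralTE//.
apply: ereal_sup_ubound; exists h' => // x; rewrite /= /comp_nnsfun_fun /=.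
have := le_trans (hf x) (fg x).
case: (g x) (g0 x) => [r| |] //= r0; last by rewrite leey.
rewrite -EFinM -EFinD !lee_fin /phi ler_pdivrMr// mulrC ge_max => hle.
by rewrite lerBlDr hle mulr_ge0 ?(ltW c0) -?lee_fin.
Qed.
End integral_le_affine.

Lemma mxBE (R : pzRingType) m n (A B : 'M[R]_(m, n)) i j :
  (A - B) i j = A i j - B i j.
Proof. by rewrite !mxE. Qed.

Section sqnorm.
Context (R : realType) (d : nat).
Implicit Types (a b : 'rV[R]_d).

Definition sqnorm a : R := \sum_(j < d) a 0 j ^+ 2.

Lemma sqnorm_ge0 a : 0 <= sqnorm a.
Proof. by apply: sumr_ge0 => j _; exact: sqr_ge0. Qed.

Lemma enorm_ge0 a : 0 <= enorm a.
Proof. exact: sqrtr_ge0. Qed.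

Lemma enorm_sqr a : enorm a ^+ 2 = sqnorm a.
Proof. by rewrite sqr_sqrtr// sqnorm_ge0. Qed.

Lemma sqnormZ (c : R) a : sqnorm (c *: a) = c ^+ 2 * sqnorm a.
Proof. by rewrite /sqnorm mulr_sumr; apply: eq_bigr => j _; rewrite mxE exprMn. Qed.

Lemma sqnormN a : sqnorm (- a) = sqnorm a.
Proof. by rewrite -scaleN1r sqnormZ sqrrN expr1n mul1r. Qed.

Lemma sqnormD a b :
  sqnorm (a + b) = sqnorm a + \sum_(j < d) 2 * a 0 j * b 0 j + sqnorm b.
Proof. by rewrite /sqnorm -!big_split; apply: eq_bigr => j _ /=; rewrite mxE; ring. Qed.

Lemma sqnormD_le a b : sqnorm (a + b) <= 2 * sqnorm a + 2 * sqnorm b.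
Proof.
rewrite /sqnorm !mulr_sumr -big_split /=; apply: ler_sum => j _; rewrite mxE.
by have := sqr_ge0 (a 0 j - b 0 j); nra.
Qed.

Lemma sqnorm_le_of_enorm_le a b (k : R) :
  enorm a <= k * enorm b -> sqnorm a <= k ^+ 2 * sqnorm b.
Proof.
move=> ab; rewrite -!enorm_sqr -exprMn ler_pXn2r// nnegrE ?enorm_ge0//.
exact: le_trans (enorm_ge0 _) ab.
Qed.

Lemma measurable_sqnorm dX (X : measurableType dX) (v : X -> 'rV[R]_d) :
  (forall j, measurable_fun setT (fun s => v s 0 j)) ->
  measurable_fun setT (fun s => sqnorm (v s)).
Proof. by move=> mv; apply: measurable_sum => j; exact: measurable_funX. Qed.
End sqnorm.

Section total_variance.
Local Open Scope ereal_scope.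
Context dX (X : measurableType dX) (R : realType) (Q : probability X R) (d : nat).
Variables (v : X -> 'rV[R]_d) (m : 'rV[R]_d).
Hypothesis v_int : forall j, Q.-integrable setT (fun s => (v s 0 j)%:E).
Hypothesis v_mean : forall j, \int[Q]_s (v s 0 j)%:E = (m 0 j)%:E.
Hypothesis dev_int : Q.-integrable setT (fun s => (sqnorm (v s - m))%:E).

Definition total_variance : R := fine (\int[Q]_s (sqnorm (v s - m))%:E).

Lemma total_variance_ge0 : (0 <= total_variance)%R.
Proof. by apply/fine_ge0/integral_ge0 => s _; rewrite lee_fin sqnorm_ge0. Qed.

Lemma integral_sqnorm_dev :
  \int[Q]_s (sqnorm (v s - m))%:E = total_variance%:E.
Proof. by rewrite fineK//; exact: integrable_fin_num. Qed.

Lemma integrable_dev j : Q.-integrable setT (fun s => ((v s - m) 0 j)%:E).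
Proof.
under eq_fun do rewrite !mxE EFinB.
by apply: integrableB => //; exact: finite_measure_integrable_cst.
Qed.

Lemma integral_dev j : \int[Q]_s ((v s - m) 0 j)%:E = 0.
Proof.
under eq_integral do rewrite !mxE EFinB.
rewrite integralB_EFin//; [|exact: v_int|exact: finite_measure_integrable_cst].
by rewrite v_mean integral_cst// [X in _ * X]probability_setT mule1 subee.
Qed.

Lemma integrable_lin_dev (c : 'I_d -> R) :
  Q.-integrable setT (fun s => (\sum_(j < d) c j * (v s - m) 0 j)%:E).
Proof.
under eq_fun do rewrite -sumEFin.
apply: integrable_sum => // j _; under eq_fun do rewrite EFinM.
exact/integrableZl/integrable_dev.
Qed.

Lemma integral_lin_dev (c : 'I_d -> R) :
  \int[Q]_s (\sum_(j < d) c j * (v s - m) 0 j)%:E = 0.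
Proof.
under eq_integral do rewrite -sumEFin.
rewrite integral_sum//; last first.
  by move=> j; under eq_fun do rewrite EFinM; exact/integrableZl/integrable_dev.
rewrite big1// => j _; under eq_integral do rewrite EFinM.
by rewrite integralZl ?integral_dev ?mule0//; exact: integrable_dev.
Qed.

Lemma integral_affine_sqnorm (b : 'rV[R]_d) (al be : R) :
  \int[Q]_s (al * sqnorm (b + v s) + be)%:E
  = (al * (sqnorm (b + m) + total_variance) + be)%:E.
Proof.
pose c j := (2 * al * (b + m) 0 j)%R.
pose A := (al * sqnorm (b + m) + be)%R.
have decomp s : (al * sqnorm (b + v s) + be = A
    + \sum_(j < d) c j * (v s - m) 0 j + al * sqnorm (v s - m))%R.
  have -> : (b + v s = (b + m) + (v s - m))%R by rewrite -addrA [(m + _)%R]addrC subrK.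
  have -> : (\sum_(j < d) c j * (v s - m) 0 j
      = al * \sum_(j < d) 2 * (b + m) 0 j * (v s - m) 0 j)%R.
    by rewrite mulr_sumr; apply: eq_bigr => j _; rewrite /c; ring.
  by rewrite sqnormD /A; ring.
have iC : Q.-integrable setT (fun s => (al * sqnorm (v s - m))%:E).
  by under eq_fun do rewrite EFinM; exact: integrableZl.
under eq_integral do rewrite decomp !EFinD.
rewrite integralD//; last first.
  apply: integrableD => //; [exact: finite_measure_integrable_cst|].
  exact: integrable_lin_dev.
rewrite integralD//; [|exact: finite_measure_integrable_cst|exact: integrable_lin_dev].
rewrite integral_lin_dev adde0 integral_cst// [X in _ * X]probability_setT mule1.
under eq_integral do rewrite EFinM.
by rewrite integralZl// integral_sqnorm_dev -EFinM -EFinD /A; congr (_%:E); ring.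
Qed.

Lemma iidE_affine_sqnorm_sum n (a : 'rV[R]_d) (al be : R) :
  iidE Q n (fun ys => (al * sqnorm (a + \sum_(y <- ys) v y) + be)%:E)
  = (al * (sqnorm (a + n%:R *: m) + n%:R * total_variance) + be)%:E.
Proof.
elim: n a al be => [|n IH] a al be /=.
  by rewrite big_nil scale0r !addr0 mul0r addr0.
under eq_integral => s _.
  rewrite (_ : (fun ys => _) = (fun ys =>
      (al * sqnorm ((a + v s) + \sum_(y <- ys) v y) + be)%:E)); last first.
    by apply: funext => ys; rewrite big_cons addrA.
  rewrite IH (_ : (al * (sqnorm (a + v s + n%:R *: m) + n%:R * total_variance)
      + be = al * sqnorm ((a + n%:R *: m) + v s)
      + (al * (n%:R * total_variance) + be))%R); last by rewrite addrAC; ring.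
  over.
have -> : (n.+1%:R *: m = n%:R *: m + m)%R by rewrite mulrSr scalerDl scale1r.
by rewrite integral_affine_sqnorm mulrSr [in RHS]addrA; congr (_%:E); ring.
Qed.
End total_variance.

Section iidE_monotone.
Local Open Scope ereal_scope.
Context dX (X : measurableType dX) (R : realType) (Q : probability X R).

Lemma iidE_ge0 n (F : seq X -> \bar R) :
  (forall xs, 0 <= F xs) -> 0 <= iidE Q n F.
Proof.
elim: n F => [|n IH] F F0 /=; first exact: F0.
by apply: integral_ge0 => s _; exact: IH.
Qed.

Lemma ge0_le_iidE n (F G : seq X -> \bar R) :
  (forall xs, 0 <= F xs) -> (forall xs, F xs <= G xs) ->
  iidE Q n F <= iidE Q n G.
Proof.
elim: n F G => [|n IH] F G F0 FG /=; first exact: FG.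
(* [ge0_le_integral] would require the partial integrals to be measurable. *)
have := @integral_le_affine _ _ _ Q (fun s => iidE Q n (fun xs => F (s :: xs)))
  (fun s => iidE Q n (fun xs => G (s :: xs))) 1 0 ltr01 (lexx 0).
rewrite mul1e adde0; apply => s; first exact: iidE_ge0.
  by apply: iidE_ge0 => xs; exact: le_trans (FG _).
by rewrite mul1e adde0; exact: IH.
Qed.
End iidE_monotone.

Lemma probability_setT_neq0 dX (X : measurableType dX) (R : realType)
    (Q : probability X R) : [set: X] !=set0.
Proof.
apply/set0P/negP => /eqP X0; have := probability_setT Q.
by rewrite X0 measure0 => /esym/eqP; rewrite gt_eqF// lte01.
Qed.

Lemma sqnorm_mean_le dX (X : measurableType dX) (R : realType)
    (Q : probability X R) d (v : X -> 'rV[R]_d) (m : 'rV[R]_d) (K : R) :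
  (forall j, Q.-integrable setT (fun s => (v s 0 j)%:E)) ->
  (forall j, (\int[Q]_s (v s 0 j)%:E = (m 0 j)%:E)%E) ->
  (forall s, sqnorm (v s) <= K) -> sqnorm m <= K.
Proof.
move=> v_int v_mean vK.
have mv j : measurable_fun setT (fun s => v s 0 j).
  exact/measurable_EFinP/(measurable_int _ (v_int j)).
have dev_int : Q.-integrable setT (fun s => (sqnorm (v s - m))%:E).
  apply: (@le_integrable _ _ _ _ _ measurableT _
    (EFin \o cst (2 * K + 2 * sqnorm m))); last exact: finite_measure_integrable_cst.
  - apply/measurable_EFinP/measurable_sqnorm => j.
    by under eq_fun do rewrite !mxE; exact: measurable_funB.
  - move=> s _; rewrite /= lee_fin !ger0_norm ?sqnorm_ge0//.
      by apply: le_trans (sqnormD_le _ _) _; rewrite sqnormN lerD2r ler_pM2l.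
    by rewrite addr_ge0 ?mulr_ge0 ?sqnorm_ge0// (le_trans (sqnorm_ge0 _) (vK s)).
have := integral_affine_sqnorm v_int v_mean dev_int 0 1 0.
under eq_integral do rewrite add0r mul1r addr0.
rewrite add0r mul1r addr0 => sqnorm_mean.
have : (\int[Q]_s (sqnorm (v s))%:E <= \int[Q]_s K%:E)%E.
  apply: ge0_le_integral => // [s _||s _]; rewrite ?lee_fin ?sqnorm_ge0 ?vK//.
  exact/measurable_EFinP/measurable_sqnorm.
rewrite integral_cst// [X in (_ * X)%E]probability_setT mule1 sqnorm_mean lee_fin.
by have := total_variance_ge0 Q v m; lra.
Qed.

Section minibatch_gradient.
Context (R : realType) (d M : nat) dX (X : measurableType dX).
Variables (Q : probability X R) (W : Type) (L : 'rV[R]_d -> W -> X -> R).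
Variables (sigma l : R).
Let G th w := grad (fun th' => popLoss Q L th' w) th.
Hypothesis M_gt0 : (0 < M)%N.
Hypothesis sgrad_int :
  forall th w j, Q.-integrable setT (fun s => (sgrad L th w s 0 j)%:E).
Hypothesis sgrad_mean :
  forall th w j, (\int[Q]_s (sgrad L th w s 0 j)%:E = (G th w 0 j)%:E)%E.
Hypothesis sgrad_var : forall th w,
  (\int[Q]_s ((enorm (sgrad L th w s - G th w)) ^+ 2)%:E <= (sigma ^+ 2)%:E)%E.
Hypothesis sgrad_lip : forall s w th1 th2,
  enorm (sgrad L th1 w s - sgrad L th2 w s) <= l * enorm (th1 - th2).

Let V th w := total_variance Q (sgrad L th w) (G th w).

Lemma integral_sqnorm_sgrad_dev_le th w :
  (\int[Q]_s (sqnorm (sgrad L th w s - G th w))%:E <= (sigma ^+ 2)%:E)%E.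
Proof. by under eq_integral do rewrite -enorm_sqr; exact: sgrad_var. Qed.

Lemma integrable_sqnorm_sgrad_dev th w :
  Q.-integrable setT (fun s => (sqnorm (sgrad L th w s - G th w))%:E).
Proof.
apply/integrableP; split.
  apply/measurable_EFinP/measurable_sqnorm => j; under eq_fun do rewrite mxBE.
  apply: measurable_funB => //.
  exact/measurable_EFinP/(measurable_int _ (sgrad_int th w j)).
under eq_integral do rewrite gee0_abs ?lee_fin ?sqnorm_ge0//.
exact: le_lt_trans (integral_sqnorm_sgrad_dev_le th w) (ltey _).
Qed.

Lemma total_variance_sgrad_le th w : V th w <= sigma ^+ 2.
Proof.
rewrite -lee_fin /V -integral_sqnorm_dev; last exact: integrable_sqnorm_sgrad_dev.
exact: integral_sqnorm_sgrad_dev_le.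
Qed.

Lemma iidE_affine_sqnorm_mbgrad th w (al be : R) :
  iidE Q M (fun ys => (al * sqnorm (mbgrad M L th w ys) + be)%:E)
  = (al * (sqnorm (G th w) + V th w / M%:R) + be)%:E.
Proof.
have M_neq0 : M%:R != 0 :> R by rewrite pnatr_eq0 -lt0n.
rewrite (_ : (fun ys => _) = (fun ys =>
    (al / M%:R ^+ 2 * sqnorm (0 + \sum_(y <- ys) sgrad L th w y) + be)%:E)).
  rewrite (iidE_affine_sqnorm_sum (sgrad_int th w) (sgrad_mean th w)).
    by rewrite add0r sqnormZ /V; congr (_%:E); field.
  exact: integrable_sqnorm_sgrad_dev.
by apply: funext => ys; rewrite add0r /mbgrad sqnormZ exprVn mulrA.
Qed.

Lemma sqnorm_grad_lip th1 th2 w :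
  sqnorm (G th1 w - G th2 w) <= l ^+ 2 * sqnorm (th1 - th2).
Proof.
apply: (sqnorm_mean_le (v := fun s => sgrad L th1 w s - sgrad L th2 w s)).
- move=> j; under eq_fun do rewrite mxBE EFinB.
  exact: integrableB _ (sgrad_int th1 w j) (sgrad_int th2 w j).
- move=> j; under eq_integral do rewrite mxBE EFinB.
  rewrite integralB_EFin//; [|exact: sgrad_int|exact: sgrad_int].
  by rewrite !sgrad_mean mxBE EFinB.
- by move=> s; exact/sqnorm_le_of_enorm_le/sgrad_lip.
Qed.

Lemma lip_mul_enorm_ge0 (w : W) (th : 'rV[R]_d) : 0 <= l * enorm th.
Proof.
have [s _] := probability_setT_neq0 Q.
by have := sgrad_lip s w th 0; rewrite subr0; exact: le_trans (enorm_ge0 _).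
Qed.

Lemma iidE_sqnorm_mbgrad_ascent_le th w xs (rho : R) :
  (iidE Q M (fun ys =>
     ((enorm (mbgrad M L (th + rho *: mbgrad M L th w xs) w ys)) ^+ 2)%:E)
   <= (2 * rho ^+ 2 * l ^+ 2 * sqnorm (mbgrad M L th w xs)
       + (2 * sqnorm (G th w) + sigma ^+ 2 / M%:R))%:E)%E.
Proof.
set th' := th + _.
rewrite (_ : (fun ys => _) = fun ys => (1 * sqnorm (mbgrad M L th' w ys) + 0)%:E).
  rewrite iidE_affine_sqnorm_mbgrad mul1r addr0 lee_fin.
  have := sqnormD_le (G th w) (G th' w - G th w); rewrite addrC subrK.
  have := sqnorm_grad_lip th' th w.
  rewrite (_ : th' - th = rho *: mbgrad M L th w xs); last first.
    by rewrite /th' addrC addKr.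
  rewrite sqnormZ.
  have : V th' w / M%:R <= sigma ^+ 2 / M%:R.
    by rewrite ler_pM2r ?invr_gt0 ?ltr0n//; exact: total_variance_sgrad_le.
  set S := sqnorm (mbgrad M L th w xs); set U := sqnorm (G th' w - G th w).
  by lra.
by apply: funext => ys; rewrite enorm_sqr mul1r addr0.
Qed.

Lemma iidE_sqnorm_mbgrad_extragradient_le th w (rho : R) : 0 < rho ->
  (iidE Q M (fun xs => iidE Q M (fun ys =>
     ((enorm (mbgrad M L (th + rho *: mbgrad M L th w xs) w ys)) ^+ 2)%:E))
   <= ((4 * rho ^+ 2 * l ^+ 2 + 2 * rho * l + 2) * (enorm (G th w)) ^+ 2
       + (5 * rho ^+ 2 * l ^+ 2 + 2) * (sigma ^+ 2 / M%:R))%:E)%E.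
Proof.
move=> rho_gt0.
apply: le_trans.
  apply: ge0_le_iidE => [xs|xs]; last exact: iidE_sqnorm_mbgrad_ascent_le.
  by apply: iidE_ge0 => ys; rewrite lee_fin sqr_ge0.
rewrite iidE_affine_sqnorm_mbgrad lee_fin -enorm_sqr.
have le_ge0 := lip_mul_enorm_ge0 w (G th w).
have V_ge0 : 0 <= V th w / M%:R by rewrite divr_ge0 ?total_variance_ge0.
have V_le : V th w / M%:R <= sigma ^+ 2 / M%:R.
  by rewrite ler_pM2r ?invr_gt0 ?ltr0n//; exact: total_variance_sgrad_le.
set e := enorm (G th w).
set v := V th w / M%:R; set t := sigma ^+ 2 / M%:R.
have t_ge0 : 0 <= t := le_trans V_ge0 V_le.
have := mulr_ge0 (mulr_ge0 (ltW rho_gt0) le_ge0) (enorm_ge0 (G th w)).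
have : 0 <= (rho * l) ^+ 2 * (t - v) by rewrite mulr_ge0 ?sqr_ge0 ?subr_ge0.
have := mulr_ge0 (sqr_ge0 (rho * l)) t_ge0.
have := sqr_ge0 (rho * l * e).
by rewrite -/e !exprMn; nra.
Qed.
End minibatch_gradient.

Unset Implicit Arguments.
Set Strict Implicit.

Theorem lemmaA3 (R : realType) (d M : nat)
  (dX : measure_display) (X : measurableType dX) (Q : probability X R)
  (W : Type) (L : 'rV[R]_d -> W -> X -> R) (sigma l rho : R)
  (dT : measure_display) (T : measurableType dT) (P : probability T R)
  (theta_t : T -> 'rV[R]_d) (omega_t : T -> W) :
  (0 < M)%N ->
  0 < rho ->
  (* L is differentiable in theta, Q-integrable, and LL is differentiable *)
  (forall (w : W) (s : X) (th : 'rV[R]_d),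
      differentiable (fun th' => L th' w s) th) ->
  (forall (th : 'rV[R]_d) (w : W), Q.-integrable setT (fun s => (L th w s)%:E)) ->
  (forall (w : W) (th : 'rV[R]_d),
      differentiable (fun th' => popLoss Q L th' w) th) ->
  (* (i) unbiasedness *)
  (forall (th : 'rV[R]_d) (w : W) (j : 'I_d),
      Q.-integrable setT (fun s => (sgrad L th w s 0 j)%:E) /\
      (\int[Q]_s (sgrad L th w s 0 j)%:E
         = (grad (fun th' => popLoss Q L th' w) th 0 j)%:E)%E) ->
  (* (i) bounded variance *)
  (forall (th : 'rV[R]_d) (w : W),
      (\int[Q]_s ((enorm (sgrad L th w s
                    - grad (fun th' => popLoss Q L th' w) th)) ^+ 2)%:E
         <= (sigma ^+ 2)%:E)%E) ->
  (* (ii) per-sample gradient is l-Lipschitz in theta *)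
  (forall (s : X) (w : W) (th1 th2 : 'rV[R]_d),
      enorm (sgrad L th1 w s - sgrad L th2 w s) <= l * enorm (th1 - th2)) ->
  (\int[P]_tau
     iidE Q M (fun xs =>
       iidE Q M (fun ys =>
         ((enorm (mbgrad M L
             (theta_t tau + rho *: mbgrad M L (theta_t tau) (omega_t tau) xs)
             (omega_t tau) ys)) ^+ 2)%:E))
   <= (4 * rho ^+ 2 * l ^+ 2 + 2 * rho * l + 2)%:E
        * (\int[P]_tau
             ((enorm (grad (fun th' => popLoss Q L th' (omega_t tau))
                        (theta_t tau))) ^+ 2)%:E)
      + ((5 * rho ^+ 2 * l ^+ 2 + 2) * (sigma ^+ 2 / M%:R))%:E)%E.
Proof.
move=> M_gt0 rho_gt0 _ _ _ sgrad_unbiased sgrad_var sgrad_lip.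
have sgrad_int th w j := (sgrad_unbiased th w j).1.
have sgrad_mean th w j := (sgrad_unbiased th w j).2.
apply: integral_le_affine => [||tau|tau|tau].
- by have := sqr_ge0 (2 * rho * l + 1); have := sqr_ge0 (rho * l); nra.
- apply: mulr_ge0; last by rewrite divr_ge0 ?sqr_ge0.
  by have := sqr_ge0 (rho * l); rewrite exprMn; lra.
- by apply: iidE_ge0 => xs; apply: iidE_ge0 => ys; rewrite lee_fin sqr_ge0.
- by rewrite lee_fin sqr_ge0.
rewrite -EFinM -EFinD.
exact: (iidE_sqnorm_mbgrad_extragradient_le M_gt0
  sgrad_int sgrad_mean sgrad_var sgrad_lip).
Qed.
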